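(* Let $d\ge1$ and $t\ge1$ be integers, $M\ge1$, $f:[0,1]^d\to\mathbb{R}$ any function, and let $b$, $a_i$, $b_{r,i}$, $\hat g_i$ be as produced by the construction described in the context. Then: (a) for any $i\in\{0,\dots,(t+1)^d-1\}$ and $j\in\{1,\dots,(t+1)^d-1\}$, $\hat g_j(\boldsymbol\pi^i/t)=a_j/t$ if $\pi^j_r\le\pi^i_r$ for all $r\in\{1,\dots,d\}$, and $\hat g_j(\boldsymbol\pi^i/t)=0$ otherwise; (b) for every $i\in\{1,\dots,(t+1)^d-1\}$, $b+\sum_{j=1}^{i}\hat g_j(\boldsymbol\pi^i/t)=f(\boldsymbol\pi^i/t)$.
   Context: Let $\sigma(z)=\max(z,0)$ and $k=(t+1)^d$. For an integer $0\le i\le k-1$ let $\boldsymbol\pi^i=(\pi^i_1,\dots,\pi^i_d)$ be its base-$(t+1)$ digit vector, i.e. $0\le\pi^i_r\le t$ and $i=\sum_{r=1}^d\pi^i_r(t+1)^{d-r}$. For parameters $a_j,b_{1,j},\dots,b_{d,j}$ define $\hat g_j(\mathbf{x})=a_j\,\sigma\big(\sum_{r=1}^d -M\sigma(-x_r+b_{r,j})+\tfrac1t\big)$. Construction: set $b=f(\mathbf{0})$; for $i=1,\dots,k-1$ in order: let $\hat y=b+\sum_{j=1}^{i-1}\hat g_j(\boldsymbol\pi^i/t)$, set $b_{r,i}=\pi^i_r/t$ for $r=1,\dots,d$, and set $a_i=t\big(f(\boldsymbol\pi^i/t)-\hat y\big)$. *)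

From mathcomp Require Import all_boot all_order all_algebra.
Unset Printing Implicit Defensive.
Import Order.TTheory GRing.Theory Num.Theory.
Local Open Scope ring_scope.

Section Construction.
Variable R : realFieldType.

Definition relu (z : R) : R := Num.max z 0.

(* base-(t+1) digit vector of i; coordinate r : 'I_d stands for the paper's
   index r+1, so pi^i_{r+1} = (i / (t+1)^(d-(r+1))) mod (t+1). *)
Definition digit (t d i : nat) (r : 'I_d) : nat := modn (divn i (expn t.+1 (d - r.+1))) t.+1.

Definition grid (t d i : nat) : 'I_d -> R := fun r => (digit t d i r)%:R / t%:R.

Definition ghat (M : R) (t : nat) (d : nat) (a : R) (bj : 'I_d -> R) (x : 'I_d -> R) : R :=
  a * relu (\sum_(r < d) (- M * relu (- x r + bj r)) + t%:R^-1).

(* coefs d f M t n'= [:: a_1; ...; a_n] produced by the first n steps of the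
   construction (with b = f 0 and b_{r,j} = pi^j_r / t). *)
Fixpoint coefs (d : nat) (f : ('I_d -> R) -> R) (M : R) (t : nat) (n : nat) : seq R :=
  match n with
  | 0 => [::]
  | n'.+1 =>
      let s := coefs d f M t n' in
      let yhat := f (fun _ => 0) +
        \sum_(j < n') ghat M t d (nth 0 s j) (grid t d j.+1) (grid t d n'.+1) in
      rcons s (t%:R * (f (grid t d n'.+1) - yhat))
  end.
End Construction.

From mathcomp Require Import all_boot all_order all_algebra.
From mathcomp Require Import lra.
Import Order.TTheory GRing.Theory Num.Theory.
Local Open Scope ring_scope.

(* If [x] dominates the breakpoints [bj] coordinatewise, every inner [relu]
   of [ghat] vanishes and the unit returns [a/t]; if one coordinate of [x]
   lies at least [1/t] below its breakpoint, then [M >= 1] pushes the outer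
   argument below [0] and the unit vanishes.  Distinct grid digits differ by
   at least one step [1/t], which gives (a).  For (b), the unit [j = i]
   contributes [a_i/t = f(pi^i/t) - yhat], the residual [a_i] was built from. *)

Section Relu.
Variable R : realFieldType.

Lemma relu_id (z : R) : 0 <= z -> relu R z = z.
Proof. by move=> z_ge0; rewrite /relu max_l. Qed.

Lemma relu_eq0 (z : R) : z <= 0 -> relu R z = 0.
Proof. by move=> z_le0; rewrite /relu max_r. Qed.

Lemma relu_ge (z : R) : z <= relu R z.
Proof. by rewrite /relu le_max lexx. Qed.

Lemma relu_ge0 (z : R) : 0 <= relu R z.
Proof. by rewrite /relu le_max lexx orbT. Qed.

End Relu.

Section Ghat.
Variables (R : realFieldType) (M : R) (t d : nat).
Hypothesis M_ge1 : 1 <= M.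

Lemma ghat_dominating (a : R) (bj x : 'I_d -> R) :
  (forall r, bj r <= x r) -> ghat R M t d a bj x = a / t%:R.
Proof.
move=> bj_le_x; rewrite /ghat big1 ?add0r.
  by rewrite relu_id // invr_ge0 ler0n.
by move=> r _; rewrite relu_eq0 ?mulr0 // addrC subr_le0.
Qed.

Lemma ghat_separated (a : R) (bj x : 'I_d -> R) (r0 : 'I_d) :
  t%:R^-1 <= bj r0 - x r0 -> ghat R M t d a bj x = 0.
Proof.
move=> gap; rewrite /ghat relu_eq0 ?mulr0 // (bigD1 r0) //=.
have rest_le0 : \sum_(r < d | r != r0) - M * relu R (- x r + bj r) <= 0.
  apply: sumr_le0 => r _; rewrite mulNr oppr_le0.
  by rewrite mulr_ge0 ?relu_ge0 // (le_trans ler01 M_ge1).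
have inv_ge0 : 0 <= (t%:R : R)^-1 by rewrite invr_ge0 ler0n.
set u := relu R _.
have u_ge : t%:R^-1 <= u.
  by apply: le_trans gap _; rewrite addrC; exact: relu_ge.
have Mu_ge : u <= M * u by rewrite ler_peMl //; lra.
move: rest_le0; set s := \sum_(_ < d | _) _; rewrite mulNr; lra.
Qed.

Lemma ghat_grid (a : R) (i j : nat) :
  ghat R M t d a (grid R t d j) (grid R t d i) =
  if [forall r, (digit t d j r <= digit t d i r)%N] then a / t%:R else 0.
Proof.
case: ifP => [/forallP dig_le | /negbT].
  by apply: ghat_dominating => r; rewrite ler_wpM2r ?invr_ge0 ?ler0n ?ler_nat.
rewrite negb_forall => /existsP [r0]; rewrite -ltnNge => dig_lt.
apply: (ghat_separated _ _ _ r0); rewrite /grid -mulrBl -[X in X <= _]mul1r.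
rewrite ler_wpM2r ?invr_ge0 ?ler0n // lerBrDr addrC natr1 ler_nat.
exact: dig_lt.
Qed.

End Ghat.

Section Coefs.
Variables (R : realFieldType) (d : nat) (f : ('I_d -> R) -> R) (M : R) (t : nat).

Local Notation coefs := (coefs R d f M t).

Lemma size_coefs n : size (coefs n) = n.
Proof. by elim: n => //= n IH; rewrite size_rcons IH. Qed.

Lemma nth_coefs_le n m j :
  (j < n)%N -> (n <= m)%N -> nth 0 (coefs m) j = nth 0 (coefs n) j.
Proof.
move=> j_lt_n; elim: m => [|m IH].
  by rewrite leqn0 => /eqP n0; rewrite n0 in j_lt_n.
rewrite leq_eqVlt => /orP [/eqP -> // | n_lt_m].
by rewrite /= nth_rcons size_coefs (leq_trans j_lt_n n_lt_m) IH.
Qed.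

Lemma coefs_interpolate n : (0 < t)%N ->
  f (fun _ => 0) +
  \sum_(j < n) ghat R M t d (nth 0 (coefs n) j) (grid R t d j.+1) (grid R t d n.+1) +
  nth 0 (coefs n.+1) n / t%:R = f (grid R t d n.+1).
Proof.
move=> t_gt0; rewrite /= nth_rcons size_coefs ltnn eqxx.
rewrite mulrAC divff ?mul1r; first by rewrite addrC subrK.
by rewrite pnatr_eq0 -lt0n.
Qed.

End Coefs.

Arguments nth_coefs_le {R d f M t n m j}.

Theorem propositionA5 (R : realFieldType) (d t : nat) (M : R)
    (f : ('I_d -> R) -> R) :
  (1 <= d)%N -> (1 <= t)%N -> 1 <= M ->
  let k := (t.+1 ^ d)%N in
  let b := f (fun _ => 0) in
  let a := fun j : nat => nth 0 (coefs R d f M t k.-1) j.-1 in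
  let g := fun (j : nat) (x : 'I_d -> R) => ghat R M t d (a j) (grid R t d j) x in
  (forall i j : nat, (i < k)%N -> (1 <= j < k)%N ->
     g j (grid R t d i) =
       (if [forall r : 'I_d, (digit t d j r <= digit t d i r)%N]
        then a j / t%:R else 0)) /\
  (forall i : nat, (1 <= i < k)%N ->
     b + \sum_(1 <= j < i.+1) g j (grid R t d i) = f (grid R t d i)).
Proof.
move=> _ t_ge1 M_ge1 k b a g.
split=> [i j _ _ | [//|i] /andP [_ i_lt_k]]; first exact: ghat_grid.
have i_le_k : (i.+1 <= k.-1)%N by rewrite -ltnS prednK // (leq_ltn_trans _ i_lt_k).
have a_prefix j : (j < i.+1)%N -> a j.+1 = nth 0 (coefs R d f M t i.+1) j.
  by move=> j_lt; rewrite /a /= (nth_coefs_le j_lt i_le_k).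
have last_unit : g i.+1 (grid R t d i.+1) = a i.+1 / t%:R.
  by rewrite /g ghat_grid //; case: forallP.
rewrite big_nat_recr //= last_unit addrA big_add1 /= big_mkord a_prefix //.
rewrite -(coefs_interpolate _ _ f M t i t_ge1).
congr (_ + _ + _); apply: eq_bigr => j _.
have j_lt : (j < i.+1)%N := ltnW (ltn_ord j).
by rewrite /g a_prefix // (nth_coefs_le (ltn_ord j) (leqnSn i)).
Qed.
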